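(* Let $\mathit{VI}$ be a finite set of variables with $\#\mathit{VI}=n$. If $j,k\in\mathbb{N}$ with $1\le j<k\le n$, then $\mathrm{MI}(\mathit{TSD}_k)\cap\mathit{TS}_j=\{\mathit{SG}\}$.
   Context: $\mathit{SG}=\wp(\mathit{VI})\setminus\{\emptyset\}$, $\mathit{SH}=\wp(\mathit{SG})$ ordered by inclusion. $\mathrm{tuples}_j(S)=\{T\subseteq S\mid\#T=j\}$, $\mathrm{tuples}_j(sh)=\bigcup_{S'\in sh}\mathrm{tuples}_j(S')$, $\rho_{\mathit{TS}_j}(sh)=\{S\in\mathit{SG}\mid\mathrm{tuples}_j(S)\subseteq\mathrm{tuples}_j(sh)\}$, $\mathit{TS}_j=\rho_{\mathit{TS}_j}(\mathit{SH})$. $\rho_{\mathit{TSD}_k}(sh)=\{\,S\in\mathit{SG}\mid \forall T\subseteq S:\ \#T<k\implies S=\bigcup\{U\in sh\mid T\subseteq U\subseteq S\}\,\}$, $\mathit{TSD}_k=\rho_{\mathit{TSD}_k}(\mathit{SH})$ (complete lattice under inclusion, meet = intersection). $\mathrm{MI}(C)$ denotes the meet-irreducible elements of a complete lattice $C$: $x$ such that $x=y\wedge z$ implies $x=y$ or $x=z$. *)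

(* VI is a finType T; SG, SH, TS_j, TSD_k as finite sets. *)
From mathcomp Require Import all_boot.
Set Implicit Arguments. Unset Strict Implicit. Unset Printing Implicit Defensive.

Section Sharing.
Variable T : finType.

Definition SG : {set {set T}} := [set S : {set T} | S != set0].

Definition isSH (sh : {set {set T}}) : Prop := sh \subset SG.

Definition tuples (j : nat) (S : {set T}) : {set {set T}} :=
  [set U : {set T} | (U \subset S) && (#|U| == j)].

Definition tuples_sh (j : nat) (sh : {set {set T}}) : {set {set T}} :=
  \bigcup_(S in sh) tuples j S.

Definition rhoTS (j : nat) (sh : {set {set T}}) : {set {set T}} :=
  [set S in SG | tuples j S \subset tuples_sh j sh].

Definition inTS (j : nat) (x : {set {set T}}) : Prop :=
  exists sh, isSH sh /\ x = rhoTS j sh.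

Definition rhoTSD (k : nat) (sh : {set {set T}}) : {set {set T}} :=
  [set S in SG | [forall U0 : {set T},
     ((U0 \subset S) && (#|U0| < k)) ==>
       (S == \bigcup_(U in sh | (U0 \subset U) && (U \subset S)) U)]].

Definition inTSD (k : nat) (x : {set {set T}}) : Prop :=
  exists sh, isSH sh /\ x = rhoTSD k sh.

(* MI(C) for a lattice C (given as a predicate on SH) whose meet is
   intersection: x in C and x = y /\ z (y, z in C) implies x = y or x = z. *)
Definition meet_irreducible (C : {set {set T}} -> Prop) (x : {set {set T}}) : Prop :=
  C x /\ forall y z, C y -> C z -> x = y :&: z -> x = y \/ x = z.

End Sharing.

(* A family x = rho_TS_j(sh) is closed under nonempty subsets, and a set lies
   in x as soon as all its j-subsets do.  So if x <> SG, some j-set W is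
   missing from x, and x = (x u {W}) n (SG \ {W}).  Both factors are fixed by
   rho_TSD_k.  It adds no set of size <= k; and a set V of size > k that it
   adds to x u {W} would have a j-subset U outside x while being the union of
   the members of x u {W} between U and V: one of them contains a point of
   V \ U, so it is not W (as |W| = |U|), lies in x, and forces U into x.
   Neither factor is x: W is not in x, and since j < n the family SG \ {W}
   contains a strict superset of W, hence would contain W if it were x. *)
From mathcomp Require Import all_boot.
Set Implicit Arguments. Unset Strict Implicit. Unset Printing Implicit Defensive.

Section SharingClosures.
Variable T : finType.
Implicit Types (sh x : {set {set T}}) (S U V W : {set T}).

Lemma rhoTS_sub j sh : rhoTS j sh \subset SG T.
Proof. by apply/subsetP => S; rewrite inE => /andP[]. Qed.

Lemma rhoTS_SG j : rhoTS j (SG T) = SG T.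
Proof.
apply/setP => S; rewrite inE; apply/andb_idr => SS.
by apply/subsetP => U US; apply/bigcupP; exists S.
Qed.

Lemma inTS_SG j : inTS j (SG T).
Proof. by exists (SG T); rewrite rhoTS_SG; split=> //; apply: subxx. Qed.

Lemma rhoTS_subset_closed j sh S V :
  S \in rhoTS j sh -> V \subset S -> V != set0 -> V \in rhoTS j sh.
Proof.
rewrite !inE => /andP[_ jS] VS V0; rewrite V0 /=.
apply: subset_trans jS; apply/subsetP => U; rewrite !inE => /andP[UV ->].
by rewrite (subset_trans UV VS).
Qed.

Lemma rhoTS_tuple_witness j sh S :
  S \in SG T -> S \notin rhoTS j sh ->
  exists W, [/\ W \subset S, #|W| = j & W \notin rhoTS j sh].
Proof.
move=> SS; rewrite inE SS /= => /subsetPn[W].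
rewrite inE => /andP[WS /eqP Wj] Wsh.
exists W; split=> //; rewrite inE negb_and; apply/orP; right.
by apply/subsetPn; exists W; rewrite // inE subxx Wj eqxx.
Qed.

Lemma rhoTSD_sub k sh : rhoTSD k sh \subset SG T.
Proof. by apply/subsetP => S; rewrite inE => /andP[]. Qed.

Lemma sub_rhoTSD k sh : sh \subset SG T -> sh \subset rhoTSD k sh.
Proof.
move=> /subsetP shS; apply/subsetP => S Ssh; rewrite inE shS //=.
apply/forallP => U0; apply/implyP => /andP[U0S _].
rewrite eqEsubset; apply/andP; split.
  by apply: (bigcup_sup S); rewrite Ssh U0S subxx.
by apply/bigcupsP => U /andP[_ /andP[]].
Qed.

Lemma rhoTSD_small k sh S : #|S| <= k -> S \in rhoTSD k sh -> S \in sh.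
Proof.
move=> Sk; rewrite !inE => /andP[/set0Pn[a aS] /forallP/(_ (S :\ a))].
rewrite subD1set (cardsD1 a S) aS /= in Sk *; rewrite Sk => /eqP ES.
have := aS; rewrite {1}ES => /bigcupP[V /andP[Vsh /andP[SaV VS]] aV].
suff -> : S = V by [].
by apply/eqP; rewrite eqEsubset VS -(setD1K aS) subUset sub1set aV SaV.
Qed.

Lemma inTSD_fixed k x : x \subset SG T -> rhoTSD k x \subset x -> inTSD k x.
Proof.
move=> xS rx; exists x; split=> //.
by apply/eqP; rewrite eqEsubset rx sub_rhoTSD.
Qed.

Lemma inTSD_SG k : inTSD k (SG T).
Proof. exact: inTSD_fixed (rhoTSD_sub k (SG T)). Qed.

Lemma meet_irreducible_SG k : meet_irreducible (inTSD k) (SG T).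
Proof.
split=> [|y z [sy [_ ->]] _ yz]; first exact: inTSD_SG.
by left; apply/eqP; rewrite eqEsubset rhoTSD_sub yz subsetIl.
Qed.

Lemma inTSD_SG_setD1 k W : #|W| <= k -> inTSD k (SG T :\ W).
Proof.
move=> Wk; apply: inTSD_fixed; first exact: subD1set.
apply/subsetP => V Vr; rewrite in_setD1 (subsetP (rhoTSD_sub _ _) _ Vr) andbT.
by apply: contraTneq Vr => ->; apply/negP => /(rhoTSD_small Wk); rewrite !inE eqxx.
Qed.

Lemma inTSD_setU1_rhoTS j k sh W :
  0 < j -> j < k -> #|W| = j -> inTSD k (W |: rhoTS j sh).
Proof.
set x := rhoTS j sh => j0 jk Wj.
have WS : W \in SG T by rewrite inE -card_gt0 Wj.
apply: inTSD_fixed; first by rewrite subUset sub1set WS rhoTS_sub.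
apply/subsetP => V Vr; have [Vk|kV] := leqP #|V| k; first exact: rhoTSD_small Vr.
rewrite in_setU1; apply/orP; right; apply/negPn/negP => Vx.
have VS := subsetP (rhoTSD_sub _ _) _ Vr.
have [U [UV Uj Ux]] := rhoTS_tuple_witness VS Vx.
have /subsetPn[a aV aU] : ~~ (V \subset U).
  apply: contraTN kV => /subset_leq_card; rewrite Uj -leqNgt => Vj.
  exact: leq_trans Vj (ltnW jk).
move: Vr; rewrite inE => /andP[_ /forallP/(_ U)]; rewrite UV Uj jk /= => /eqP VE.
move: aV; rewrite {1}VE => /bigcupP[V' /andP[V'y /andP[UV' _]] aV'].
case/setU1P: V'y UV' aV' => [-> UW aW | V'x UV' _].
  have UeW : U = W by apply/eqP; rewrite eqEcard UW Wj Uj leqnn.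
  by rewrite UeW aW in aU.
by case/negP: Ux; apply: rhoTS_subset_closed V'x UV' _; rewrite -card_gt0 Uj.
Qed.

Lemma rhoTS_neq_SG_setD1 j sh W :
  #|W| < #|T| -> W != set0 -> rhoTS j sh != SG T :\ W.
Proof.
move=> WT W0; apply/eqP => xE.
have /subsetPn[a _ aW] : ~~ ([set: T] \subset W).
  by apply: contraTN WT => /subset_leq_card; rewrite cardsT -leqNgt.
have aWx : a |: W \in rhoTS j sh.
  rewrite xE !inE; apply/andP; split; last by apply/set0Pn; exists a; rewrite setU11.
  by apply: contra aW => /eqP/setP/(_ a); rewrite setU11 => <-.
by move: (rhoTS_subset_closed aWx (subsetUr _ _) W0); rewrite xE !inE eqxx.
Qed.

End SharingClosures.

Theorem corollary4p5 (T : finType) (n j k : nat) :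
  #|T| = n -> 1 <= j -> j < k -> k <= n ->
  forall x : {set {set T}},
    (meet_irreducible (inTSD k) x /\ inTS j x) <-> x = SG T.
Proof.
move=> Tn j1 jk kn x; split=> [[[_ MI] [sh [_ xE]]]|->]; last first.
  by split; [apply: meet_irreducible_SG | apply: inTS_SG].
subst x; set x := rhoTS j sh in MI *.
apply/eqP; rewrite eqEsubset rhoTS_sub; apply/subsetP => S SS.
apply/negPn/negP => Sx.
have [W [_ Wj Wx]] := rhoTS_tuple_witness SS Sx.
have xW : x = (W |: x) :&: (SG T :\ W).
  by rewrite setIDA -setIDAC setU1K //; apply/esym/setIidPl/rhoTS_sub.
have Wk : #|W| <= k by rewrite Wj ltnW.
case: (MI _ _ (inTSD_setU1_rhoTS sh j1 jk Wj) (inTSD_SG_setD1 Wk) xW).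
  by move=> xWx; case/negP: Wx; rewrite -/x xWx setU11.
have W0 : W != set0 by rewrite -card_gt0 Wj.
move/eqP; apply/negP; apply: rhoTS_neq_SG_setD1 W0.
by rewrite Tn Wj (leq_trans jk kn).
Qed.
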